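(* Let $S=\{X_1,\dots,X_n\}$ be a dataset, $H$ a class of binary classifiers, and $W_1,\dots,W_n$ weights with $1\le W_i\le\lambda$ for all $i$. Then for every $h\in H$, the weighted disagreement coefficient satisfies $\theta^W_h\le\lambda^2\theta_h$, where $\theta_h$ is the (unweighted) disagreement coefficient of $h$.
   Context: Unweighted: $D(h_1,h_2)=\frac1n\sum_i\mathbb{I}(h_1(X_i)\ne h_2(X_i))$, $B_H(h,r)=\{h'\in H:D(h,h')\le r\}$, $\mathrm{DIS}(V)=\{X_i:\exists h_1,h_2\in V,h_1(X_i)\ne h_2(X_i)\}$, $\theta_h=\sup_{r>0}\frac{|\mathrm{DIS}(B_H(h,r))|}{rn}$. Weighted: $D^W(h_1,h_2)=\frac{\sum_i W_i\mathbb{I}(h_1(X_i)\ne h_2(X_i))}{\sum_i W_i}$, $B^W_H(h,r)=\{h'\in H:D^W(h,h')\le r\}$, and $\theta^W_h=\sup_{r>0}\frac{\sum_{i: X_i\in\mathrm{DIS}(B^W_H(h,r))}W_i}{r\sum_{i=1}^nW_i}$. *)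

From HB Require Import structures.
From mathcomp Require Import all_boot all_order all_algebra.
From mathcomp Require Import boolp classical_sets reals constructive_ereal ereal.
Set Implicit Arguments. Unset Strict Implicit. Unset Printing Implicit Defensive.
Import Order.TTheory GRing.Theory Num.Theory.
Local Open Scope ring_scope.
Local Open Scope classical_set_scope.

Section Disagreement.
Variables (R : realType) (X : Type) (n : nat) (x : 'I_n -> X).

Definition dist (h1 h2 : X -> bool) : R :=
  (\sum_(i < n) (h1 (x i) != h2 (x i))%:R) / n%:R.

Definition ballH (H : set (X -> bool)) (h : X -> bool) (r : R) : set (X -> bool) :=
  [set h' | H h' /\ dist h h' <= r].

(* disagreement region, as a set of indices i of data points X_i *)
Definition DIS (V : set (X -> bool)) : pred 'I_n :=
  fun i => `[< exists h1 h2, [/\ V h1, V h2 & h1 (x i) != h2 (x i)] >].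

Definition theta (H : set (X -> bool)) (h : X -> bool) : \bar R :=
  ereal_sup [set ((#|DIS (ballH H h r)|)%:R / (r * n%:R))%:E | r in [set r : R | 0 < r]].

Variable W : 'I_n -> R.

Definition distW (h1 h2 : X -> bool) : R :=
  (\sum_(i < n) W i * (h1 (x i) != h2 (x i))%:R) / (\sum_(i < n) W i).

Definition ballHW (H : set (X -> bool)) (h : X -> bool) (r : R) : set (X -> bool) :=
  [set h' | H h' /\ distW h h' <= r].

Definition thetaW (H : set (X -> bool)) (h : X -> bool) : \bar R :=
  ereal_sup [set ((\sum_(i < n | DIS (ballHW H h r) i) W i) / (r * \sum_(i < n) W i))%:E
            | r in [set r : R | 0 < r]].
End Disagreement.
Arguments theta R [X n] x H h.
Arguments thetaW R [X n] x W H h.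

From HB Require Import structures.
From mathcomp Require Import all_boot all_order all_algebra.
From mathcomp Require Import boolp classical_sets reals constructive_ereal ereal.
From mathcomp Require Import ring.
Import Order.TTheory GRing.Theory Num.Theory.
Local Open Scope ring_scope.
Local Open Scope classical_set_scope.

(* Since [1 <= W i <= lambda], the weighted distance is at least [1/lambda]
   times the unweighted one, so the weighted ball of radius [r] lies in the
   unweighted ball of radius [lambda r].  The weighted mass of its
   disagreement region is then at most [lambda] times the size of
   [DIS (ballH (lambda r))], while the total weight is at least [n]; hence the
   ratio at radius [r] in [thetaW] is at most [lambda^2] times the ratio at
   radius [lambda r] in [theta]. *)

Lemma DIS_subset {X : Type} {n : nat} {x : 'I_n -> X} {V V' : set (X -> bool)} :
  V `<=` V' -> {subset DIS x V <= DIS x V'}.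
Proof.
move=> sVV' i /asboolP [h1 [h2 [Vh1 Vh2 neq]]]; apply/asboolP.
by exists h1, h2; split => //; apply: sVV'.
Qed.

Lemma theta_ge0 (R : realType) (X : Type) (n : nat) (x : 'I_n -> X)
    (H : set (X -> bool)) (h : X -> bool) :
  (0 <= theta R x H h)%E.
Proof.
apply: le_trans (ereal_sup_ubound (ex_intro2 _ _ 1 ltr01 erefl)).
by rewrite lee_fin mul1r divr_ge0.
Qed.

Section WeightedBall.
Context {R : realType} {X : Type} {n : nat} {x : 'I_n -> X}.
Context {W : 'I_n -> R} {lambda : R}.
Hypothesis W_bounds : forall i, 1 <= W i <= lambda.
Hypothesis n_gt0 : (0 < n)%N.

Let n_gt0R : 0 < n%:R :> R. Proof. by rewrite ltr0n. Qed.

Let W_ge0 i : 0 <= W i.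
Proof. by case/andP: (W_bounds i) => /(le_trans ler01). Qed.

Lemma sum_const_ord (c : R) : \sum_(i < n) c = c * n%:R.
Proof. by rewrite sumr_const card_ord mulr_natr. Qed.

Lemma sum_weights_ge : n%:R <= \sum_(i < n) W i.
Proof.
rewrite -[n%:R]mul1r -sum_const_ord.
by apply: ler_sum => i _; case/andP: (W_bounds i).
Qed.

Lemma sum_weights_le : \sum_(i < n) W i <= lambda * n%:R.
Proof.
rewrite -sum_const_ord.
by apply: ler_sum => i _; case/andP: (W_bounds i).
Qed.

Let sum_weights_gt0 : 0 < \sum_(i < n) W i.
Proof. exact: lt_le_trans n_gt0R sum_weights_ge. Qed.

Lemma dist_le_distW (h1 h2 : X -> bool) :
  dist R x h1 h2 <= lambda * distW x W h1 h2.
Proof.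
rewrite /dist /distW ler_pdivrMr // mulrA mulrAC ler_pdivlMr // mulrAC.
rewrite [leRHS]mulrC; apply: ler_pM; rewrite ?sumr_ge0 ?sum_weights_le ?ler0n //.
by apply: ler_sum => i _; rewrite ler_peMl //; case/andP: (W_bounds i).
Qed.

Lemma lambda_gt0 : 0 < lambda.
Proof.
have /andP[W_ge1 W_le] := W_bounds (Ordinal n_gt0).
exact: lt_le_trans ltr01 (le_trans W_ge1 W_le).
Qed.

Variable H : set (X -> bool).

Lemma ballHW_sub_ballH (h : X -> bool) (r : R) :
  ballHW x W H h r `<=` ballH x H h (lambda * r).
Proof.
move=> h' [Hh' dWr]; split => //.
by apply: le_trans (dist_le_distW h h') _; rewrite ler_pM2l ?lambda_gt0.
Qed.

Lemma sum_weights_DIS_le (h : X -> bool) (r : R) :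
  \sum_(i < n | DIS x (ballHW x W H h r) i) W i
    <= lambda * #|DIS x (ballH x H h (lambda * r))|%:R.
Proof.
rewrite mulr_natr -sumr_const big_mkcond [leRHS]big_mkcond /=.
apply: ler_sum => i _; case: ifP => [/(DIS_subset (ballHW_sub_ballH h r)) -> |_].
  by case/andP: (W_bounds i).
by case: ifP => // _; exact: ltW lambda_gt0.
Qed.

Lemma ratioW_le_ratio (h : X -> bool) (r : R) : 0 < r ->
  (\sum_(i < n | DIS x (ballHW x W H h r) i) W i) / (r * \sum_(i < n) W i)
    <= lambda ^+ 2 * (#|DIS x (ballH x H h (lambda * r))|%:R / (lambda * r * n%:R)).
Proof.
move=> r_gt0; set c := #|_|%:R.
have -> : lambda ^+ 2 * (c / (lambda * r * n%:R)) = lambda * c / (r * n%:R).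
  by field; rewrite !lt0r_neq0 ?lambda_gt0.
apply: le_trans (ler_wpM2r _ (sum_weights_DIS_le h r)) _.
  by rewrite invr_ge0 ltW // mulr_gt0.
apply: ler_wpM2l; first by rewrite mulr_ge0 ?ler0n ?(ltW lambda_gt0).
by rewrite lef_pV2 ?posrE ?mulr_gt0 // ler_pM2l // sum_weights_ge.
Qed.

End WeightedBall.

Theorem theorem11 (R : realType) (X : Type) (n : nat) (x : 'I_n -> X)
  (H : set (X -> bool)) (W : 'I_n -> R) (lambda : R) :
  (forall i, 1 <= W i <= lambda) ->
  forall h, H h ->
  (thetaW R x W H h <= (lambda ^+ 2)%:E * theta R x H h)%E.
Proof.
move=> W_bounds h _; have lambda2_ge0 : (0 <= (lambda ^+ 2)%:E)%E.
  by rewrite lee_fin sqr_ge0.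
case: n x W W_bounds => [|n] x W W_bounds.
  apply: ge_ereal_sup => _ [r _ <-].
  by rewrite big_ord0 mul0r mule_ge0 ?theta_ge0.
apply: ge_ereal_sup => _ [r r_gt0 <-].
have lr_gt0 : 0 < lambda * r by rewrite mulr_gt0 // (lambda_gt0 W_bounds).
apply: le_trans (lee_wpmul2l lambda2_ge0
  (ereal_sup_ubound (ex_intro2 _ _ (lambda * r) lr_gt0 erefl))).
by rewrite -EFinM lee_fin (ratioW_le_ratio W_bounds).
Qed.
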